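(* For every integer $d \geq 1$ there exist constants $k$ and $C$ (depending only on $d$) such that the following holds. Let $G$ be a finite solvable group of order $n$ generated by at most $d$ elements and with solvability class $r$, and let $H$ be any finite group not isomorphic to $G$. Then the count-free $(k, C\, r \log\log n + C)$-WL Version I algorithm distinguishes $G$ and $H$.
   Context: The solvability class of a solvable group $G$ is the least $\ell$ with $G^{(\ell)} = 1$, where $G^{(0)} = G$ and $G^{(i)} = [G^{(i-1)}, G^{(i-1)}]$. Count-free pebble game Version I on finite groups $G, H$ with $m$ pebble pairs $(p_i,p_i')$: if $|G| \ne |H|$ Spoiler wins at once; otherwise each round Spoiler picks up a pebble pair $(p_i, p_i')$, the winning condition is checked, Spoiler places one pebble of the pair on an element of either group, and Duplicator places the other pebble on an element of the other group. Spoiler wins when, with $g_1,\ldots,g_\ell \in G$ and $h_1,\ldots,h_\ell \in H$ the currently pebbled (corresponding) elements, the map $g_i \mapsto h_i$ is not a marked equivalence, i.e. it is not the case that for all $i,j,t$: $g_i = g_j \iff h_i = h_j$ and $g_ig_j = g_t \iff h_ih_j = h_t$. We say that the count-free $(k,r)$-WL Version I algorithm distinguishes $G$ and $H$ if Spoiler has a strategy to win the count-free Version I pebble game with $k+1$ pebble pairs within $r$ rounds (this is equivalent to the sets of colors of $k$-tuples differing after $r$ rounds of the count-free $k$-dimensional Weisfeiler–Leman Version I refinement, whose initial coloring is the marked-equivalence type of a tuple and whose refinement records the set, rather than multiset, of colors of tuples obtained by substituting one coordinate). *)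

From mathcomp Require Import all_boot all_fingroup all_solvable.
Set Implicit Arguments. Unset Strict Implicit. Unset Printing Implicit Defensive.
Local Open Scope group_scope.

(* A configuration of the pebble game with m pebble pairs: pair i is either
   off the board (None) or placed on (g, h) with g in G, h in H. *)
Definition config (gT hT : finGroupType) (m : nat) := 'I_m -> option (gT * hT).

Definition empty_config (gT hT : finGroupType) (m : nat) : config gT hT m :=
  fun _ => None.

Definition set_pebble (gT hT : finGroupType) (m : nat) (c : config gT hT m)
  (i : 'I_m) (x : option (gT * hT)) : config gT hT m :=
  fun j => if j == i then x else c j.

Definition marked_equiv (gT hT : finGroupType) (m : nat) (c : config gT hT m) : Prop :=
  forall (i j t : 'I_m) (gi gj gt : gT) (hi hj ht : hT),
    c i = Some (gi, hi) -> c j = Some (gj, hj) -> c t = Some (gt, ht) ->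
    (gi = gj <-> hi = hj) /\ (gi * gj = gt <-> hi * hj = ht).

(* One round: Spoiler picks up pair i, the
   winning condition is checked, Spoiler places one pebble of the pair on an
   element of either group, Duplicator places the other in the other group. *)
Fixpoint spoiler_wins (gT hT : finGroupType) (m : nat) (r : nat)
  (c : config gT hT m) : Prop :=
  match r with
  | 0 => False
  | r'.+1 =>
    exists i : 'I_m,
      let c' := set_pebble c i None in
      ~ marked_equiv c'
      \/ (exists g : gT, forall h : hT, spoiler_wins r' (set_pebble c' i (Some (g, h))))
      \/ (exists h : hT, forall g : gT, spoiler_wins r' (set_pebble c' i (Some (g, h))))
  end.

Definition cf_WL_I_distinguishes (k r : nat) (gT hT : finGroupType) : Prop :=
  #|gT| <> #|hT| \/ @spoiler_wins gT hT k.+1 r (@empty_config gT hT k.+1).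

Definition generated_by_at_most (d : nat) (gT : finGroupType) : Prop :=
  exists X : {set gT}, #|X| <= d /\ <<X>> = [set: gT].

Definition solvability_class (gT : finGroupType) (r : nat) : Prop :=
  [set: gT]^`(r) = 1 /\ forall l, [set: gT]^`(l) = 1 -> r <= l.

(* log log n, computed as floor(log2 (floor (log2 n))) (0 for n < 4). *)
Definition loglog (n : nat) : nat := trunc_log 2 (trunc_log 2 n).

From mathcomp Require Import all_boot all_fingroup all_solvable.
From mathcomp Require Import zify.
From Stdlib Require Import Classical FunctionalExtensionality.
Set Implicit Arguments. Unset Strict Implicit. Unset Printing Implicit Defensive.
Local Open Scope group_scope.

(* Spoiler pebbles d generators of G and Duplicator answers in H.  Call g
   definable in T rounds if, in the game of G against itself with the
   generators pebbled on both sides, Spoiler wins within T rounds whenever g is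
   pebbled against a different element.  Definable elements are closed under
   products and quotients at a cost of O(1) rounds, and under powers at a cost
   of O(log log |G|) rounds, since each squaring of the exponent costs O(1).
   Going down the derived series, G^(i)/G^(i+1) is abelian, so every coset of
   G^(i+1) in G^(i) has a representative which is a product of O(log |G|)
   powers of generators of G^(i); multiplying them along a balanced tree costs
   O(log log |G|) rounds, and Schreier's lemma then yields generators of G^(i+1)
   definable in O(log log |G|) further rounds.  Hence all of G is definable in
   O(r log log |G|) rounds.  If Duplicator could survive a few more rounds in
   the game of G against H, composing her strategy with its mirror image shows
   that the element of G she can answer to h in H is unique; this map is then
   a bijective homomorphism H -> G. *)

(** * The pebble game *)

Section PebbleGame.
Variables (gT hT : finGroupType) (m : nat).
Implicit Types (c : config gT hT m) (i j : 'I_m).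

Lemma set_pebble_eq c i z : set_pebble c i z i = z.
Proof. by rewrite /set_pebble eqxx. Qed.

Lemma set_pebble_neq c i j z : j != i -> set_pebble c i z j = c j.
Proof. by rewrite /set_pebble => /negbTE ->. Qed.

Lemma set_pebble_set c i z z' : set_pebble (set_pebble c i z') i z = set_pebble c i z.
Proof. by apply: functional_extensionality => j; rewrite /set_pebble; case: (j == i). Qed.

Lemma spoiler_winsS r c : spoiler_wins r c -> spoiler_wins r.+1 c.
Proof.
elim: r c => [|r IH] c //= [i [W|[[g W]|[h W]]]]; exists i.
- by left.
- by right; left; exists g => h; apply: IH.
- by right; right; exists h => g; apply: IH.
Qed.

Lemma spoiler_wins_leq r r' c : r <= r' -> spoiler_wins r c -> spoiler_wins r' c.
Proof. by move=> /subnK <-; elim: (r' - r) => // k IH /IH /spoiler_winsS. Qed.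

Definition subconfig c c' := forall i p, c i = Some p -> c' i = Some p.

Lemma marked_equiv_sub c c' : subconfig c c' -> marked_equiv c' -> marked_equiv c.
Proof. by move=> sub M i j t gi gj gt hi hj ht /sub Hi /sub Hj /sub Ht; apply: M Hi Hj Ht. Qed.

Lemma subconfig_set c c' i z : subconfig c c' -> subconfig (set_pebble c i z) (set_pebble c' i z).
Proof. by move=> sub j p; rewrite /set_pebble; case: (j == i) => // /sub. Qed.

Lemma spoiler_wins_sub r c c' : subconfig c c' -> spoiler_wins r c -> spoiler_wins r c'.
Proof.
elim: r c c' => [|r IH] c c' sub //= [i [W|[[g W]|[h W]]]]; exists i.
- by left=> /(marked_equiv_sub (subconfig_set (i := i) (z := None) sub)).
- by right; left; exists g => h; apply: IH (W h); do 2!apply: subconfig_set.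
- by right; right; exists h => g; apply: IH (W g); do 2!apply: subconfig_set.
Qed.

Lemma spoiler_wins_placeG r c i g :
  (forall h, spoiler_wins r (set_pebble c i (Some (g, h)))) -> spoiler_wins r.+1 c.
Proof. by move=> W; exists i; right; left; exists g => h; rewrite set_pebble_set. Qed.

Lemma spoiler_wins_placeH r c i h :
  (forall g, spoiler_wins r (set_pebble c i (Some (g, h)))) -> spoiler_wins r.+1 c.
Proof. by move=> W; exists i; right; right; exists h => g; rewrite set_pebble_set. Qed.

Lemma spoiler_wins_unmarked r c (i a b t : 'I_m) ga gb gt ha hb ht :
  i != a -> i != b -> i != t ->
  c a = Some (ga, ha) -> c b = Some (gb, hb) -> c t = Some (gt, ht) ->
  ~ ((ga = gb <-> ha = hb) /\ (ga * gb = gt <-> ha * hb = ht)) ->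
  spoiler_wins r.+1 c.
Proof.
move=> ia ib it Ha Hb Ht N; exists i; left => M; apply/N/(M a b t).
- by rewrite set_pebble_neq 1?eq_sym.
- by rewrite set_pebble_neq 1?eq_sym.
- by rewrite set_pebble_neq 1?eq_sym.
Qed.

Lemma duplicator_marked r c i : ~ spoiler_wins r.+1 c -> marked_equiv (set_pebble c i None).
Proof. by move=> L; apply: NNPP => M; apply: L; exists i; left. Qed.

Lemma duplicator_answerG r c i g : ~ spoiler_wins r.+1 c ->
  exists h, ~ spoiler_wins r (set_pebble c i (Some (g, h))).
Proof.
move=> L; apply: NNPP => N; apply/L/(spoiler_wins_placeG (i := i) (g := g)) => h.
by apply: NNPP => W; apply: N; exists h.
Qed.

Lemma duplicator_answerH r c i h : ~ spoiler_wins r.+1 c ->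
  exists g, ~ spoiler_wins r (set_pebble c i (Some (g, h))).
Proof.
move=> L; apply: NNPP => N; apply/L/(spoiler_wins_placeH (i := i) (h := h)) => g.
by apply: NNPP => W; apply: N; exists g.
Qed.

Definition anchored (P : {set 'I_m}) (w : 'I_m -> gT * hT) c :=
  forall i, i \in P -> c i = Some (w i).

Lemma anchored_set P w c i z : anchored P w c -> i \notin P -> anchored P w (set_pebble c i z).
Proof. by move=> anc nPi j Pj; rewrite set_pebble_neq ?anc //; apply: contraNneq nPi => <-. Qed.

Definition perm_config c (s : {perm 'I_m}) : config gT hT m := fun i => c (s i).

Lemma perm_config_set c s i z :
  perm_config (set_pebble c i z) s = set_pebble (perm_config c s) (s^-1 i) z.
Proof.
apply: functional_extensionality => j; rewrite /perm_config /set_pebble.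
by rewrite -(inj_eq (@perm_inj _ s^-1)) permK.
Qed.

Lemma spoiler_wins_perm r c s : spoiler_wins r c -> spoiler_wins r (perm_config c s).
Proof.
elim: r c => [|r IH] c //= [i [W|[[g W]|[h W]]]]; exists (s^-1 i).
- left=> M; apply: W => a b t ga gb gt ha hb ht Ha Hb Ht.
  by apply: (M (s^-1 a) (s^-1 b) (s^-1 t)); rewrite -perm_config_set /perm_config permKV.
- by right; left; exists g => h; rewrite -!perm_config_set; apply: IH.
- by right; right; exists h => g; rewrite -!perm_config_set; apply: IH.
Qed.

End PebbleGame.
Arguments spoiler_wins_unmarked {gT hT m r c i a b t ga gb gt ha hb ht}.

Definition swap_config (gT hT : finGroupType) m (c : config gT hT m) : config hT gT m :=
  fun i => omap (fun p => (p.2, p.1)) (c i).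

Lemma swap_configK (gT hT : finGroupType) m (c : config gT hT m) : swap_config (swap_config c) = c.
Proof. by apply: functional_extensionality => i; rewrite /swap_config; case: (c i) => [[]|]. Qed.

Lemma swap_config_set (gT hT : finGroupType) m (c : config gT hT m) i z :
  swap_config (set_pebble c i z) = set_pebble (swap_config c) i (omap (fun p => (p.2, p.1)) z).
Proof.
by apply: functional_extensionality => j; rewrite /swap_config /set_pebble; case: (j == i).
Qed.

Lemma marked_equiv_swap (gT hT : finGroupType) m (c : config gT hT m) :
  marked_equiv (swap_config c) -> marked_equiv c.
Proof.
move=> M i j t gi gj gt hi hj ht Hi Hj Ht.
have := M i j t hi hj ht gi gj gt; rewrite /swap_config Hi Hj Ht.
move=> /(_ erefl erefl erefl) [E1 E2].
by split; split=> H; [apply/E1 | apply/E1 | apply/E2 | apply/E2].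
Qed.

Lemma spoiler_wins_swap (gT hT : finGroupType) m r (c : config gT hT m) :
  spoiler_wins r c -> spoiler_wins r (swap_config c).
Proof.
elim: r c => [|r IH] c //= [i [W|[[g W]|[h W]]]]; exists i.
- by left=> M; apply/W/marked_equiv_swap; rewrite swap_config_set.
- by right; right; exists g => h; have := IH _ (W h); rewrite !swap_config_set.
- by right; left; exists h => g; have := IH _ (W g); rewrite !swap_config_set.
Qed.

Section Composition.
Variables (gT hT kT : finGroupType) (m : nat).

Definition composable (c1 : config gT hT m) (c2 : config hT kT m) (c3 : config gT kT m) :=
  forall i, [/\ c1 i = None, c2 i = None & c3 i = None] \/
    exists g h k, [/\ c1 i = Some (g, h), c2 i = Some (h, k) & c3 i = Some (g, k)].

Lemma composable_unset c1 c2 c3 i : composable c1 c2 c3 ->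
  composable (set_pebble c1 i None) (set_pebble c2 i None) (set_pebble c3 i None).
Proof. by move=> C j; rewrite /set_pebble; case: (j == i); [left | apply: C]. Qed.

Lemma composable_set c1 c2 c3 i g h k : composable c1 c2 c3 ->
  composable (set_pebble c1 i (Some (g, h))) (set_pebble c2 i (Some (h, k)))
             (set_pebble c3 i (Some (g, k))).
Proof. by move=> C j; rewrite /set_pebble; case: (j == i); [right; exists g, h, k | apply: C]. Qed.

Lemma marked_equiv_comp c1 c2 c3 : composable c1 c2 c3 ->
  marked_equiv c1 -> marked_equiv c2 -> marked_equiv c3.
Proof.
move=> C M1 M2 i j t gi gj gt ki kj kt Hi Hj Ht.
case: (C i) => [[_ _ E]|[g1 [h1 [k1 [A1 B1 C1]]]]]; first by rewrite E in Hi.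
case: (C j) => [[_ _ E]|[g2 [h2 [k2 [A2 B2 C2]]]]]; first by rewrite E in Hj.
case: (C t) => [[_ _ E]|[g3 [h3 [k3 [A3 B3 C3]]]]]; first by rewrite E in Ht.
move: C1 C2 C3; rewrite Hi Hj Ht => -[-> ->] [-> ->] [-> ->].
have [E1 F1] := M1 _ _ _ _ _ _ _ _ _ A1 A2 A3.
have [E2 F2] := M2 _ _ _ _ _ _ _ _ _ B1 B2 B3.
by split; split=> H; [apply/E2/E1 | apply/E1/E2 | apply/F2/F1 | apply/F1/F2].
Qed.

(* Duplicator survives G~K by running her strategies for G~H and H~K side by side. *)
Lemma not_spoiler_wins_comp r c1 c2 c3 : composable c1 c2 c3 ->
  ~ spoiler_wins r c1 -> ~ spoiler_wins r c2 -> ~ spoiler_wins r c3.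
Proof.
elim: r c1 c2 c3 => [|r IH] c1 c2 c3 C L1 L2 //= [i [W|[[g W]|[k W]]]].
- apply/W/(marked_equiv_comp (composable_unset i C)).
    exact: duplicator_marked L1.
  exact: duplicator_marked L2.
- have [h L1h] := duplicator_answerG i g L1.
  have [k L2k] := duplicator_answerG i h L2.
  by apply: IH (composable_set i g h k C) L1h L2k _; move: (W k); rewrite set_pebble_set.
- have [h L2h] := duplicator_answerH i k L2.
  have [g L1g] := duplicator_answerH i h L1.
  by apply: IH (composable_set i g h k C) L1g L2h _; move: (W g); rewrite set_pebble_set.
Qed.

End Composition.

(** * Definability *)

Lemma exists_notin (T : finType) (A : {set T}) (s : seq T) :
  size s < #|A| -> exists2 i, i \in A & i \notin s.
Proof.
move=> lt_s_A; have /subsetPn[i Ai nsi] : ~~ (A \subset s); last by exists i.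
apply: contraTN lt_s_A => /subset_leq_card le_A_s.
by rewrite -leqNgt (leq_trans le_A_s) ?card_size.
Qed.

Lemma fourth_pebble m (a b c : 'I_m) : 3 < m -> exists i : 'I_m, [&& i != a, i != b & i != c].
Proof.
move=> m_gt3; have [|i _] := exists_notin (A := [set: 'I_m]) (s := [:: a; b; c]).
  by rewrite cardsT card_ord.
by rewrite !inE !negb_or => ?; exists i.
Qed.

(* Measured in the game of G against itself, so that it does not depend on H. *)
Definition definable (gT : finGroupType) m (P : {set 'I_m}) (v : 'I_m -> gT) T (g : gT) :=
  forall (c : config gT gT m) (q : 'I_m) (g' : gT),
    anchored P (fun i => (v i, v i)) c -> q \notin P -> g' != g -> c q = Some (g, g') ->
    spoiler_wins T c.

Definition definable_from (gT : finGroupType) m T (a g : gT) :=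
  forall p : 'I_m, definable [set p] (fun=> a) T g.

Section Definability.
Variables (gT : finGroupType) (m : nat).
Hypothesis m_gt3 : 3 < m.

Section Anchors.
Variables (P : {set 'I_m}) (v : 'I_m -> gT).
Hypothesis P_room : #|P| + 3 <= m.
Local Notation anchored := (anchored P (fun i => (v i, v i))).

Lemma free_pebble (a b : 'I_m) : exists i, [&& i \notin P, i != a & i != b].
Proof.
have [|i] := exists_notin (A := ~: P) (s := [:: a; b]).
  by move: P_room; rewrite -[m in _ <= m]card_ord -(cardsC P) leq_add2l.
by rewrite inE => nPi; rewrite !inE negb_or => /andP[ia ib]; exists i; rewrite nPi ia ib.
Qed.

Lemma definable_leq T T' g : T <= T' -> definable P v T g -> definable P v T' g.
Proof. by move=> le D c q g' anc nPq ng Hq; apply: spoiler_wins_leq le (D _ _ _ anc nPq ng Hq). Qed.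

Lemma definable_anchor i : i \in P -> definable P v 1 (v i).
Proof.
move=> Pi c q g' anc _ ng Hq; have [j /and3P[ji jq _]] := fourth_pebble i q q m_gt3.
apply: (spoiler_wins_unmarked ji jq jq (anc i Pi) Hq Hq) => -[[E _] _].
by move: ng; rewrite -(E erefl) eqxx.
Qed.

Lemma definable1 : definable P v 1 1.
Proof.
move=> c q g' _ _ ng Hq; have [j /and3P[jq _ _]] := fourth_pebble q q q m_gt3.
apply: (spoiler_wins_unmarked jq jq jq Hq Hq Hq) => -[_ [E _]].
have /(congr1 (mulg g'^-1)) := E (mulg1 1); rewrite mulKg mulVg => g'1.
by rewrite g'1 eqxx in ng.
Qed.

(* Spoiler pebbles u and w on fresh pebbles; unless Duplicator answers with u
   and w themselves, definability of u or w wins. *)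
Lemma definable_pair T u w g :
  definable P v T u -> definable P v T w ->
  (forall (c : config gT gT m) (i1 i2 q : 'I_m) g', g' != g ->
     c i1 = Some (u, u) -> c i2 = Some (w, w) -> c q = Some (g, g') -> spoiler_wins 1 c) ->
  definable P v T.+3 g.
Proof.
move=> Du Dw finish c q g' anc nPq ng Hq.
have [i1 /and3P[nPi1 i1q _]] := free_pebble q q.
apply: (spoiler_wins_placeG (i := i1) (g := u)) => u'.
have anc1 := anchored_set (Some (u, u')) anc nPi1.
have [eq_u|nu] := eqVneq u' u; last first.
  exact: spoiler_wins_leq (leqW (leqnSn _)) (Du _ i1 u' anc1 nPi1 nu (set_pebble_eq _ _ _)).
subst u'.
have [i2 /and3P[nPi2 i2q i2i1]] := free_pebble q i1.
apply: (spoiler_wins_placeG (i := i2) (g := w)) => w'.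
have anc2 := anchored_set (Some (w, w')) anc1 nPi2.
have [eq_w|nw] := eqVneq w' w; last first.
  exact: spoiler_wins_leq (leqnSn _) (Dw _ i2 w' anc2 nPi2 nw (set_pebble_eq _ _ _)).
subst w'.
apply: spoiler_wins_leq (finish _ i1 i2 q g' ng _ _ _) => //.
- by rewrite set_pebble_neq 1?eq_sym // set_pebble_eq.
- exact: set_pebble_eq.
- by rewrite !set_pebble_neq // eq_sym.
Qed.

Lemma definableM T u w : definable P v T u -> definable P v T w -> definable P v T.+3 (u * w).
Proof.
move=> Du Dw; apply: definable_pair Du Dw _ => c i1 i2 q g' ng H1 H2 Hq.
have [j /and3P[j1 j2 jq]] := fourth_pebble i1 i2 q m_gt3.
apply: (spoiler_wins_unmarked j1 j2 jq H1 H2 Hq) => -[_ [E _]].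
by move: ng; rewrite (E erefl) eqxx.
Qed.

Lemma definableMV T u w : definable P v T u -> definable P v T w -> definable P v T.+3 (u * w^-1).
Proof.
move=> Du Dw; apply: definable_pair Du Dw _ => c i1 i2 q g' ng H1 H2 Hq.
have [j /and3P[jq j2 j1]] := fourth_pebble q i2 i1 m_gt3.
apply: (spoiler_wins_unmarked jq j2 j1 Hq H2 H1) => -[_ [E _]].
by move: ng; have <- := E (mulgKV w u); rewrite mulgK eqxx.
Qed.

Lemma definable_trans T S a g :
  definable P v T a -> definable_from m S a g -> definable P v (maxn T S).+1 g.
Proof.
move=> Da Dag c q g' anc nPq ng Hq.
have [i /and3P[nPi iq _]] := free_pebble q q.
apply: (spoiler_wins_placeG (i := i) (g := a)) => a'.
have [->|na] := eqVneq a' a.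
  apply: spoiler_wins_leq (leq_maxr T S) (Dag i _ q g' _ _ ng _).
  - by move=> j; rewrite inE => /eqP ->; rewrite set_pebble_eq.
  - by rewrite inE eq_sym.
  - by rewrite set_pebble_neq // eq_sym.
apply: spoiler_wins_leq (leq_maxl T S) (Da _ i a' _ nPi na (set_pebble_eq _ _ _)).
exact: anchored_set.
Qed.

Lemma definable_prod T t (s : seq gT) : 0 < T -> size s <= 2 ^ t ->
  {in s, forall z, definable P v T z} -> definable P v (T + 3 * t) (\prod_(z <- s) z).
Proof.
move=> T_gt0; elim: t s => [|t IH] s le_s Ds.
  case: s le_s Ds => [|z [|//]] _ Ds; last by rewrite big_seq1 addn0; apply: Ds; rewrite mem_head.
  by rewrite big_nil; apply: definable_leq definable1; lia.
rewrite -(cat_take_drop (2 ^ t) s) big_cat /=.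
have -> : T + 3 * t.+1 = (T + 3 * t).+3 by lia.
apply: definableM; apply: IH.
- by rewrite size_take_min geq_minl.
- by move=> z /mem_take; apply: Ds.
- by rewrite size_drop; move: le_s; rewrite expnS; lia.
- by move=> z /mem_drop; apply: Ds.
Qed.

End Anchors.

Let single_room (p : 'I_m) : #|[set p]| + 3 <= m. Proof. by rewrite cards1. Qed.

Lemma definable_from_leq T T' (a g : gT) :
  T <= T' -> definable_from m T a g -> definable_from m T' a g.
Proof. by move=> le D p; apply: definable_leq (D p). Qed.

Lemma definable_from_id (a : gT) : definable_from m 1 a a.
Proof. by move=> p; apply: (definable_anchor (v := fun=> a) (set11 p)). Qed.

Lemma definable_from1 (a : gT) : definable_from m 1 a 1.
Proof. by move=> p; apply: definable1. Qed.

Lemma definable_fromM T (a u w : gT) :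
  definable_from m T a u -> definable_from m T a w -> definable_from m T.+3 a (u * w).
Proof. by move=> Du Dw p; apply/(definableM (single_room p) (Du p) (Dw p)). Qed.

Lemma definable_from_trans T S (a b g : gT) :
  definable_from m T a b -> definable_from m S b g -> definable_from m (maxn T S).+1 a g.
Proof. by move=> Db Dg p; apply/(definable_trans (single_room p) (Db p) Dg). Qed.

Definition tower j := (2 ^ (2 ^ j))%N.

(* An exponent e <= tower j.+1 = B ^ 2, with B = tower j, is q * B + r with
   q, r <= B, and a ^+ (q * B) = (a ^+ q) ^+ B is reached through a ^+ q. *)
Lemma definable_fromX j e (a : gT) : e <= tower j -> definable_from m (4 * j + 4) a (a ^+ e).
Proof.
elim: j e a => [|j IH] e a le_e.
  case: e le_e => [|[|[|//]]] _.
  - by rewrite expg0; apply: definable_from_leq (@definable_from1 a).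
  - by rewrite expg1; apply: definable_from_leq (@definable_from_id a).
  - by rewrite expgS expg1; apply: definable_fromM (@definable_from_id a) (@definable_from_id a).
have towerS : tower j.+1 = (tower j * tower j)%N by rewrite /tower expnS mul2n -addnn expnD.
have [->|ne] := eqVneq e (tower j.+1).
  rewrite towerS expgM.
  apply: definable_from_leq (definable_from_trans (IH _ a (leqnn _)) (IH _ _ (leqnn _))).
  by rewrite maxnn; lia.
have lt_e : e < tower j * tower j by rewrite -towerS ltn_neqAle ne le_e.
have tower_gt0 : 0 < tower j by rewrite expn_gt0.
have le_q : e %/ tower j <= tower j by rewrite ltnW // ltn_divLR.
have le_r : e %% tower j <= tower j by rewrite ltnW // ltn_pmod.
rewrite (divn_eq e (tower j)) expgD expgM.
apply: definable_from_leq (definable_fromM (T := 4 * j + 5) _ _); first lia.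
  apply: definable_from_leq (definable_from_trans (IH _ a le_q) (IH _ _ (leqnn _))).
  by rewrite maxnn; lia.
by apply: definable_from_leq (IH _ a le_r); lia.
Qed.

Lemma definableX (P : {set 'I_m}) (v : 'I_m -> gT) T (a : gT) j e : #|P| + 3 <= m ->
  definable P v T a -> e <= tower j -> definable P v (T + 4 * j + 5) (a ^+ e).
Proof.
move=> room Da le_e.
by apply: definable_leq (definable_trans room Da (definable_fromX le_e)); lia.
Qed.

End Definability.
Arguments definable1 {gT m} m_gt3 {P v}.
Arguments definable_anchor {gT m} m_gt3 {P v i}.

(** * Group theory *)

Section GroupFacts.
Variable gT : finGroupType.
Implicit Types (A G H K N : {group gT}) (S R : {set gT}).

Lemma proper_card_double H G : H \proper G -> 2 * #|H| <= #|G|.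
Proof.
move=> pHG; rewrite -(Lagrange (proper_sub pHG)) mulnC leq_mul2l.
by rewrite indexg_gt1 proper_subn ?orbT.
Qed.

Lemma card_lt4_abelian G : #|G| < 4 -> abelian G.
Proof.
move=> lt_G_4; have := cardG_gt0 G.
case def_n: #|G| lt_G_4 => [//|[|[|[|//]]]] _ _.
- by rewrite (card_le1_trivg (eq_leq def_n)) abelian1.
- by rewrite cyclic_abelian // prime_cyclic // def_n.
- by rewrite cyclic_abelian // prime_cyclic // def_n.
Qed.

(* Adjoining a generator outside the current subgroup at least doubles it. *)
Lemma cycle_words_mod K S : <<S>> = K -> forall j A,
  K^`(1) \subset A -> A \subset K -> #|K| < 2 ^ j * #|A| ->
  forall k, k \in K -> exists fs : seq gT,
    [/\ size fs <= j, {subset fs <= \bigcup_(s in S) <[s]>} & (\prod_(f <- fs) f)^-1 * k \in A].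
Proof.
move=> genS; elim=> [|j IH] A dA sAK ltK k Kk.
  by move: ltK; rewrite mul1n ltnNge subset_leq_card.
have nAK : A <| K := sub_der1_normal dA sAK.
have [sSA | /subsetPn[s Ss notAs]] := boolP (S \subset A).
  exists [::]; split=> //; rewrite big_nil invg1 mul1g.
  by rewrite (subsetP _ k Kk) // -genS gen_subG.
have Ks : s \in K by rewrite -genS mem_gen.
have nAs : <[s]> \subset 'N(A) by rewrite cycle_subG (subsetP (normal_norm nAK)).
have pA : A \proper A <*> <[s]>.
  rewrite properEneq joing_subl andbT; apply: contraNneq notAs => ->.
  by rewrite mem_gen // inE cycle_id orbT.
have [|||fs [size_fs sub_fs]] := IH (A <*> <[s]>)%G _ _ _ k Kk.
- exact: subset_trans dA (joing_subl _ _).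
- by rewrite join_subG sAK cycle_subG.
- apply: leq_trans ltK _; rewrite expnS -mulnA mulnCA leq_mul2l.
  by rewrite proper_card_double ?orbT.
rewrite /= norm_joinEr // => /mulsgP[a y Aa /cycleP[e ->] def_k].
exists (rcons fs (s ^+ e)); split; first by rewrite size_rcons.
  move=> f; rewrite mem_rcons inE => /predU1P[->|/sub_fs //].
  by apply/bigcupP; exists s; rewrite // mem_cycle.
rewrite big_rcons /= invMg -mulgA def_k -conjgE.
by rewrite memJ_norm // groupX // (subsetP (normal_norm nAK)).
Qed.

Lemma schreier_gen K N S R : N <| K -> <<S>> = K -> R \subset K ->
  (forall k, k \in K -> exists2 r, r \in R & r^-1 * k \in N) ->
  <<(R * S * R^-1 :|: R) :&: N>> = N.
Proof.
move=> nNK genS sRK cover.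
have nN : K \subset 'N(N) := normal_norm nNK.
set M := <<_>>.
have sMN : M \subset N by rewrite gen_subG subsetIr.
have RNM r : r \in R -> r \in N -> r \in M by move=> Rr Nr; rewrite mem_gen // !inE Rr orbT.
have words n (c : 'I_n -> gT) : (forall i, c i \in S) ->
    exists2 r, r \in R & (\prod_i c i) * r^-1 \in M.
  elim: n c => [|n IH] c Sc.
    have [r Rr] := cover 1 (group1 K); rewrite mulg1 => Nr'.
    by exists r; rewrite // big_ord0 mul1g groupV RNM // -groupV.
  rewrite big_ord_recr /=.
  have [r Rr Mr] := IH (fun i => c (widen_ord (leqnSn n) i)) (fun i => Sc _).
  have Ks : c ord_max \in K by rewrite -genS mem_gen.
  have Kr : r \in K := subsetP sRK r Rr.
  have [r' Rr' Nr'] := cover _ (groupM Kr Ks).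
  have Kr' : r' \in K := subsetP sRK r' Rr'.
  have Nrsr : r * c ord_max * r'^-1 \in N.
    have -> : r * c ord_max * r'^-1 = (r'^-1 * (r * c ord_max)) ^ r'^-1.
      by rewrite conjgE invgK !mulgA mulgV mul1g.
    by rewrite memJ_norm // groupV (subsetP nN).
  exists r' => //.
  have -> : \prod_(i < n) c (widen_ord (leqnSn n) i) * c ord_max * r'^-1 =
            (\prod_(i < n) c (widen_ord (leqnSn n) i) * r^-1) * (r * c ord_max * r'^-1).
    by rewrite !mulgA mulgKV.
  by rewrite groupM // mem_gen // in_setI in_setU Nrsr andbT mem_mulg ?mem_mulg ?memV_invg.
apply/eqP; rewrite eqEsubset sMN; apply/subsetP => n Nn.
have /gen_prodgP[l [c Sc def_n]] : n \in <<S>> by rewrite genS (subsetP (normal_sub nNK)).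
have [r Rr] := words l c Sc; rewrite -def_n => Mnr.
have Nr : r \in N by rewrite -groupV -(groupMl _ Nn) (subsetP sMN).
by rewrite -(mulgKV r n) groupM // RNM.
Qed.

End GroupFacts.

(** * Definability along the derived series *)

Lemma trunc_log_lt_loglog n : (trunc_log 2 n).+1 <= 2 ^ (loglog n).+1.
Proof. exact: trunc_log_ltn. Qed.

Lemma leq_tower_loglog n : n <= tower (loglog n).+1.
Proof.
apply: ltnW (leq_trans (trunc_log_ltn n (isT : 1 < 2)) _).
by rewrite leq_pexp2l // trunc_log_lt_loglog.
Qed.

Definition anchors d : {set 'I_d.+3} := [set i : 'I_d.+3 | i < d].

Lemma card_anchors d : #|anchors d| <= d.
Proof.
have le_d : d <= d.+3 by lia.
apply: leq_trans (subset_leq_card (_ : _ \subset widen_ord le_d @: [set: 'I_d])) _.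
  apply/subsetP => i; rewrite inE => lt_i_d; apply/imsetP.
  by exists (Ordinal lt_i_d) => //; apply: val_inj.
by rewrite (leq_trans (leq_imset_card _ _)) // cardsT card_ord.
Qed.

Section DerivedSeries.
Variables (gT : finGroupType) (d : nat) (x : nat -> gT).
Hypotheses (d_gt0 : 0 < d) (genX : <<[set x i | i : 'I_d]>> = [set: gT]).

Let m_gt3 : 3 < d.+3. Proof. by rewrite ltnS. Qed.
Let room : #|anchors d| + 3 <= d.+3. Proof. by have := card_anchors d; lia. Qed.
Local Notation definableG := (definable (anchors d) (fun i => x i)).
Local Notation J := (loglog #|gT|).+1.

Lemma definable_cycle T a b : definableG T a -> b \in <[a]> -> definableG (T + 4 * J + 5) b.
Proof.
move=> Da /cycleP[e ->]; rewrite -expg_mod_order.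
apply: (definableX m_gt3 room Da).
have := leq_tower_loglog #|gT|; have := ltn_pmod e (order_gt0 a).
have : #[a] <= #|gT| by apply: max_card.
lia.
Qed.

Lemma definable_coset_rep (K N : {group gT}) (S : {set gT}) T :
    0 < T -> N <| K -> K^`(1) \subset N -> <<S>> = K -> {in S, forall s, definableG T s} ->
  forall k, k \in K -> exists r, [/\ r \in K, definableG (T + 7 * J + 5) r & r^-1 * k \in N].
Proof.
move=> T_gt0 nNK dN genS DS k Kk.
have [|fs [size_fs sub_fs Nk]] :=
  cycle_words_mod genS (j := (trunc_log 2 #|gT|).+1) dN (normal_sub nNK) _ Kk.
  apply: leq_ltn_trans (max_card (mem K)) (leq_trans (trunc_log_ltn _ (isT : 1 < 2)) _).
  by rewrite leq_pmulr.
have Sfs f : f \in fs -> exists2 s, s \in S & f \in <[s]>.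
  by move=> /sub_fs /bigcupP[s Ss sf]; exists s.
exists (\prod_(f <- fs) f); split=> //.
  rewrite big_seq group_prod // => f /Sfs[s Ss sf].
  by apply: subsetP sf; rewrite cycle_subG -genS mem_gen.
have -> : T + 7 * J + 5 = T + 4 * J + 5 + 3 * J by lia.
apply: (definable_prod m_gt3 room).
- by lia.
- exact: leq_trans size_fs (trunc_log_lt_loglog _).
- by move=> f /Sfs[s Ss sf]; apply: definable_cycle (DS s Ss) sf.
Qed.

Lemma definable_schreier_gens (K N : {group gT}) (S : {set gT}) T :
    0 < T -> N <| K -> K^`(1) \subset N -> <<S>> = K -> {in S, forall s, definableG T s} ->
  exists2 S', <<S'>> = N & {in S', forall s, definableG (T + 7 * J + 11) s}.
Proof.
move=> T_gt0 nNK dN genS DS.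
have /fin_all_exists[rep rep_spec] k : exists r,
    k \in K -> [/\ r \in K, definableG (T + 7 * J + 5) r & r^-1 * k \in N].
  have [/(definable_coset_rep T_gt0 nNK dN genS DS)[r] | _] := boolP (k \in K).
    by exists r.
  by exists 1.
set R := rep @: K.
have DR r : r \in R -> definableG (T + 7 * J + 5) r.
  by case/imsetP=> k Kk ->; have [] := rep_spec k Kk.
exists ((R * S * R^-1 :|: R) :&: N).
  apply: schreier_gen nNK genS _ _.
    by apply/subsetP => _ /imsetP[k Kk ->]; have [] := rep_spec k Kk.
  by move=> k Kk; exists (rep k); [apply: imset_f | have [] := rep_spec k Kk].
move=> s' /setIP[/setUP[/mulsgP[rs r'' /mulsgP[r s Rr Ss ->] R'' ->] | /DR Dr] _]; last first.
  by apply: definable_leq Dr; lia.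
have Rr' : r''^-1 \in R by rewrite -memV_invg invgK.
have Ds : definableG (T + 7 * J + 5) s by apply: definable_leq (DS s Ss); lia.
have Drs := definableM m_gt3 room (DR r Rr) Ds.
have Dr' : definableG (T + 7 * J + 5).+3 r''^-1 by apply: definable_leq (DR _ Rr'); lia.
by rewrite -[r'']invgK; apply: definable_leq (definableMV m_gt3 room Drs Dr'); lia.
Qed.

Let gens_rounds i := 1 + i * (7 * J + 11).

Lemma definable_derived_gens i :
  exists2 S, <<S>> = [set: gT]^`(i) & {in S, forall s, definableG (gens_rounds i) s}.
Proof.
elim: i => [|i [S genS DS]].
  exists [set x i | i : 'I_d]; first by rewrite derg0.
  move=> _ /imsetP[i _ ->]; rewrite /gens_rounds mul0n addn0.
  have lt_i : i < d.+3 by have := ltn_ord i; lia.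
  have Pi : inord i \in anchors d by rewrite inE inordK.
  by have := definable_anchor m_gt3 (v := fun j : 'I_d.+3 => x j) Pi; rewrite inordK.
have [||S' genS' DS'] := definable_schreier_gens _ (der_normalS i [set: gT]%G) _ genS DS.
- by rewrite /gens_rounds.
- by rewrite derg1 -dergSn.
by exists S' => // s /DS' Ds; apply: definable_leq Ds; rewrite /gens_rounds mulSn; lia.
Qed.

Lemma definable_all r : [set: gT]^`(r) = 1 -> forall g, definableG (1 + r * (7 * J + 14)) g.
Proof.
move=> derr.
suff key j : j <= r -> forall k, k \in [set: gT]^`(r - j) -> definableG (gens_rounds r + 3 * j) k.
  move=> g; have := key r (leqnn r) g; rewrite subnn derg0 inE => /(_ isT) D.
  by apply: definable_leq D; rewrite /gens_rounds; nia.
elim: j => [|j IH] le_j k.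
  rewrite subn0 derr => /set1gP ->.
  by apply: definable_leq (definable1 m_gt3); rewrite /gens_rounds; lia.
set i := r - j.+1; have def_i : i.+1 = r - j by rewrite /i; lia.
have [S genS DS] := definable_derived_gens i.
move=> Kk; have [||r0 [_ Dr0 Nk]] := definable_coset_rep _ (der_normalS i [set: gT]%G) _ genS DS Kk.
- by rewrite /gens_rounds.
- by rewrite derg1 -dergSn.
have Dk : definableG (gens_rounds r + 3 * j) (r0^-1 * k).
  by apply: IH (ltnW le_j) _ _; rewrite -def_i.
have Dr0' : definableG (gens_rounds r + 3 * j) r0.
  by apply: definable_leq Dr0; rewrite /gens_rounds; nia.
by rewrite -(mulKVg r0 k); apply: definable_leq (definableM m_gt3 room Dr0' Dk); lia.
Qed.

End DerivedSeries.

(** * Duplicator's strategy as an isomorphism *)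

Definition prefix_config (gT hT : finGroupType) m j (x : nat -> gT) (y : nat -> hT) :
    config gT hT m :=
  fun i => if i < j then Some (x i, y i) else None.
Arguments prefix_config {gT hT} m j x y.

Lemma anchored_prefix (gT hT : finGroupType) d (x : nat -> gT) (y : nat -> hT) :
  anchored (anchors d) (fun i => (x i, y i)) (prefix_config d.+3 d x y).
Proof. by move=> i; rewrite inE /prefix_config => ->. Qed.

Lemma spoiler_wins_prefix (gT hT : finGroupType) m (x : nat -> gT) R n : n <= m ->
    (forall y : nat -> hT, spoiler_wins R (prefix_config m n x y)) ->
  spoiler_wins (n + R) (@empty_config gT hT m).
Proof.
move=> le_n_m W.
suff pebble k j : j + k = n -> forall y : nat -> hT, spoiler_wins (k + R) (prefix_config m j x y).
  exact: (pebble n 0 (add0n n) (fun=> 1)).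
elim: k j => [|k IH] j def_n y; first by move: def_n; rewrite addn0 => ->; apply: W.
have lt_j : j < m by lia.
rewrite addSn; apply: (spoiler_wins_placeG (i := Ordinal lt_j) (g := x j)) => h.
pose y' t := if t == j then h else y t.
apply: spoiler_wins_sub (IH j.+1 _ y'); last by lia.
move=> i p; rewrite /prefix_config /set_pebble /y'.
rewrite -val_eqE /=; case: eqVneq => [->|nij]; first by rewrite ltnSn.
by rewrite ltnS leq_eqVlt (negbTE nij).
Qed.

Section Isomorphism.
Variables (gT hT : finGroupType) (d : nat) (x : nat -> gT) (y : nat -> hT) (D : nat).
Hypotheses (d_gt0 : 0 < d) (card_eq : #|gT| = #|hT|).
Hypothesis definable_all : forall g, definable (anchors d) (fun i => x i) D g.
Hypothesis survives : ~ spoiler_wins D.+4 (prefix_config d.+3 d x y).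

Local Notation c0 := (prefix_config d.+3 d x y).
Local Notation pebbled := (anchored (anchors d) (fun i => (x i, y i))).

Let p0 : 'I_d.+3 := inord d.
Let p0_free : p0 \notin anchors d. Proof. by rewrite /p0 inE inordK ?ltnn //; lia. Qed.
Let survives1 : ~ spoiler_wins D.+1 c0.
Proof. by move=> /(spoiler_wins_leq (leq_addl 3 D.+1)). Qed.

(* The pairs Duplicator can afford to pebble form the graph of an isomorphism. *)
Let sim g h := ~ spoiler_wins D (set_pebble c0 p0 (Some (g, h))).

Lemma sim_exists_g h : exists g, sim g h.
Proof. exact: duplicator_answerH p0 h survives1. Qed.

(* Composing with the swapped game for g2 yields G against itself with g1 opposite g2. *)
Lemma sim_uniq g1 g2 h : sim g1 h -> sim g2 h -> g1 = g2.
Proof.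
move=> S1 S2; apply: NNPP => /eqP ne.
set c3 := set_pebble (prefix_config d.+3 d x x) p0 (Some (g1, g2)).
have C : composable (set_pebble c0 p0 (Some (g1, h)))
                    (swap_config (set_pebble c0 p0 (Some (g2, h)))) c3.
  move=> i; rewrite /c3 /swap_config /set_pebble /prefix_config.
  case: (i == p0); first by right; exists g1, h, g2.
  by case: (i < d); [right; exists (x i), (y i), (x i) | left].
apply: not_spoiler_wins_comp C S1 _ _.
  by move=> /spoiler_wins_swap; rewrite swap_configK.
apply: (definable_all (g' := g2) _ p0_free _ (set_pebble_eq _ _ _)); last by rewrite eq_sym.
exact: anchored_set _ (anchored_prefix x x) p0_free.
Qed.

Section Phi.
Variable phi : hT -> gT.
Hypothesis phi_sim : forall h, sim (phi h) h.

Lemma spoiler_wins_off_phi c q g h : pebbled c -> q \notin anchors d ->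
  c q = Some (g, h) -> g != phi h -> spoiler_wins D c.
Proof.
move=> anc nq Hq ne.
have W : spoiler_wins D (set_pebble c0 p0 (Some (g, h))).
  by apply: NNPP => L; move/eqP: ne; apply; apply: sim_uniq L (@phi_sim h).
apply: spoiler_wins_sub (spoiler_wins_perm (tperm p0 q) W) => i p; rewrite /perm_config.
have [->|niq] := eqVneq i q; first by rewrite tpermR set_pebble_eq Hq.
have [def_i|nip] := eqVneq i p0.
  rewrite def_i in niq *; rewrite tpermL set_pebble_neq 1?eq_sym // /prefix_config.
  by move: nq; rewrite inE => /negbTE ->.
rewrite tpermD 1?eq_sym // set_pebble_neq // /prefix_config.
by case: ifP => // lt_i_d [<-]; apply: anc; rewrite inE.
Qed.

Lemma spoiler_wins_forced r c q h : pebbled c -> q \notin anchors d -> D <= r ->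
  spoiler_wins r (set_pebble c q (Some (phi h, h))) -> spoiler_wins r.+1 c.
Proof.
move=> anc nq le_D_r W; apply: (spoiler_wins_placeH (i := q) (h := h)) => g.
have [->//|ne] := eqVneq g (phi h).
apply: spoiler_wins_leq le_D_r (spoiler_wins_off_phi _ nq (set_pebble_eq _ _ _) ne).
exact: anchored_set.
Qed.

Lemma phiM h1 h2 : phi (h1 * h2) = phi h1 * phi h2.
Proof.
apply: NNPP => ne; apply: survives.
pose p1 : 'I_d.+3 := inord d.+1; pose p2 : 'I_d.+3 := inord d.+2.
have [v0 v1 v2] : [/\ val p0 = d, val p1 = d.+1 & val p2 = d.+2] by split; apply: inordK; lia.
have [n01 n02 n12] : [/\ p0 != p1, p0 != p2 & p1 != p2] by split; rewrite -val_eqE ?v0 ?v1 ?v2; lia.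
have [F1 F2] : p1 \notin anchors d /\ p2 \notin anchors d by rewrite !inE v1 v2; lia.
have anc0 := anchored_prefix (d := d) x y.
apply: (spoiler_wins_forced (r := D.+3) (h := h1) anc0 p0_free); first lia.
have anc1 := anchored_set (Some (phi h1, h1)) anc0 p0_free.
apply: (spoiler_wins_forced (r := D.+2) (h := h2) anc1 F1); first lia.
have anc2 := anchored_set (Some (phi h2, h2)) anc1 F1.
apply: (spoiler_wins_forced (r := D.+1) (h := h1 * h2) anc2 F2); first lia.
have [j /and3P[j0 j1 j2]] := fourth_pebble p0 p1 p2 (d_gt0 : 3 < d.+3).
apply: (spoiler_wins_unmarked j0 j1 j2 _ _ (set_pebble_eq _ _ _)).
- by rewrite (set_pebble_neq _ _ n02) (set_pebble_neq _ _ n01) set_pebble_eq.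
- by rewrite (set_pebble_neq _ _ n12) set_pebble_eq.
by move=> -[_ [_ /(_ erefl) E]]; apply/ne/esym/E.
Qed.

Lemma phi_surj g : exists h, g = phi h.
Proof.
have [h Sgh] := duplicator_answerG p0 g survives1.
by exists h; apply: sim_uniq Sgh (@phi_sim h).
Qed.

Lemma isog_phi : [set: gT] \isog [set: hT].
Proof.
rewrite isogEcard !cardsT card_eq leqnn andbT.
apply/homgP; exists (@Morphism hT gT [set: hT] phi (in2W phiM)).
apply/setP => g; rewrite morphimEdom inE; apply/imsetP.
by have [h ->] := phi_surj g; exists h; rewrite ?inE.
Qed.

End Phi.

Lemma duplicator_survives_isog : [set: gT] \isog [set: hT].
Proof. by have [phi phi_sim] := fin_all_exists sim_exists_g; apply: isog_phi phi_sim. Qed.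

End Isomorphism.

Lemma sub_enum_gens (gT : finGroupType) (X : {set gT}) d :
  #|X| <= d -> X \subset [set nth 1 (enum X) i | i : 'I_d].
Proof.
move=> le_X_d; apply/subsetP => a Xa; apply/imsetP.
have lt_a : index a (enum X) < d by apply: leq_trans le_X_d; rewrite cardE index_mem mem_enum.
by exists (Ordinal lt_a); rewrite //= nth_index ?mem_enum.
Qed.

Lemma loglog_eq0 n : loglog n = 0 -> n < 4.
Proof.
move/eqP; rewrite /loglog trunc_log_eq0 /= => le1.
apply: leq_trans (trunc_log_ltn n (isT : 1 < 2)) _.
by rewrite -[4]/(2 ^ 2)%N leq_pexp2l.
Qed.

Lemma solvability_class_small (gT : finGroupType) r :
  solvability_class gT r -> loglog #|gT| = 0 -> r <= 1.
Proof.
move=> [_ min_r] /loglog_eq0 small; apply/min_r/derG1P/card_lt4_abelian.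
by rewrite cardsT.
Qed.

Theorem theorem3p1 (d : nat) : 1 <= d ->
  exists k C : nat,
    forall (gT hT : finGroupType) (r : nat),
      solvable [set: gT] ->
      generated_by_at_most d gT ->
      solvability_class gT r ->
      ~ ([set: gT] \isog [set: hT]) ->
      cf_WL_I_distinguishes k (C * r * loglog #|gT| + C) gT hT.
Proof.
move=> d_gt0; exists d.+2, (d + 28) => gT hT r _ [X [le_X_d genX]] class_r niso.
have [card_eq|] := eqVneq #|gT| #|hT|; last by left; apply/eqP.
right; pose x i := nth 1 (enum X) i.
have genx : <<[set x i | i : 'I_d]>> = [set: gT].
  by apply/eqP; rewrite eqEsubset subsetT -genX genS // sub_enum_gens.
have Dall := definable_all d_gt0 genx (proj1 class_r).
have W : spoiler_wins (d + (1 + r * (7 * (loglog #|gT|).+1 + 14)).+4) (@empty_config gT hT d.+3).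
  apply: spoiler_wins_prefix => [|y]; first by lia.
  by apply: NNPP => /(duplicator_survives_isog d_gt0 card_eq Dall).
apply: spoiler_wins_leq W.
have [ll0|ll_gt0] := posnP (loglog #|gT|).
  by have := solvability_class_small class_r ll0; rewrite ll0; nia.
nia.
Qed.
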